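(* Let $\Xi$ be smooth with $\Xi(0,0,0,0)=0$ and $\frac{\partial\Xi}{\partial\psi}(0,0,0,0)<0$, and let $T>0$. There exist $C_\Xi>0$ and $\varepsilon_2>0$ such that if $\omega_{1i}(t,\psi),\omega_{2i}(t,\psi)$ ($i=1,2,3$) are $C^1$ functions, $T$-periodic in $t$, with $\|\omega_{1i}\|_{C^1}\le\varepsilon_2$ and $\|\omega_{2i}\|_{C^1}\le\varepsilon_2$, and $\psi_1^*,\psi_2^*$ are the $T$-periodic solutions of $\psi_j'(t)=\Xi(\psi_j(t),\omega_{j1}(t,\psi_j(t)),\omega_{j2}(t,\psi_j(t)),\omega_{j3}(t,\psi_j(t)))$, $j=1,2$, then $$\|\psi_1^*-\psi_2^*\|\le(1+C_\Xi T\varepsilon_2)\exp(\Xi_{\psi,0}T)\frac1{\Xi_{\psi,0}}\sum_{i=1}^3\Xi_{\omega_{i,0}}\|\omega_{1i}-\omega_{2i}\|,$$ $$\|\psi_1^{*\prime}-\psi_2^{*\prime}\|\le(1+C_\Xi T\varepsilon_2)\exp(\Xi_{\psi,0}T)\sum_{i=1}^3\Xi_{\omega_{i,0}}\|\omega_{1i}-\omega_{2i}\|+(1+C_\Xi\varepsilon_2)\sum_{i=1}^3\Xi_{\omega_{i,0}}\|\omega_{1i}-\omega_{2i}\|.$$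
   Context: $\|\cdot\|$ denotes the sup ($C^0$) norm. $\Xi_{\psi,0}=\big|\frac{\partial\Xi}{\partial\psi}(0,0,0,0)\big|$ and $\Xi_{\omega_{i,0}}=1+\big|\frac{\partial\Xi}{\partial\omega_i}(0,0,0,0)\big|$ for $i=1,2,3$. For small $C^1$ data each such equation has a unique $T$-periodic solution near $0$. *)

From Stdlib Require Import Reals List.
From Coquelicot Require Import Coquelicot.
Open Scope R_scope.

(* Points of R^n are represented as nat -> R (coordinates 0..n-1 used). *)
Definition upd (p : nat -> R) (i : nat) (x : R) : nat -> R :=
  fun j => if Nat.eqb j i then x else p j.

Definition pderiv (i : nat) (g : (nat -> R) -> R) : (nat -> R) -> R :=
  fun p => Derive (fun x => g (upd p i x)) (p i).

Definition iter_pderiv (l : list nat) (g : (nat -> R) -> R) : (nat -> R) -> R :=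
  fold_right pderiv g l.

Definition cont_n (n : nat) (g : (nat -> R) -> R) : Prop :=
  forall p eps, 0 < eps -> exists delta, 0 < delta /\
    forall q, (forall j, (j < n)%nat -> Rabs (q j - p j) < delta) ->
      Rabs (g q - g p) < eps.

Definition smooth_n (n : nat) (g : (nat -> R) -> R) : Prop :=
  forall l : list nat, List.Forall (fun i => (i < n)%nat) l ->
    cont_n n (iter_pderiv l g) /\
    (forall i p, (i < n)%nat ->
       ex_derive (fun x => iter_pderiv l g (upd p i x)) (p i)).

Definition lift4 (Xi : R -> R -> R -> R -> R) : (nat -> R) -> R :=
  fun p => Xi (p 0%nat) (p 1%nat) (p 2%nat) (p 3%nat).

Definition smooth4 (Xi : R -> R -> R -> R -> R) : Prop := smooth_n 4 (lift4 Xi).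

Definition origin : nat -> R := fun _ => 0.

(* partial derivative of Xi in its i-th argument (0 = psi, 1..3 = omega_i)
   at (0,0,0,0) *)
Definition dXi0 (Xi : R -> R -> R -> R -> R) (i : nat) : R :=
  pderiv i (lift4 Xi) origin.

Definition Xi_psi0 (Xi : R -> R -> R -> R -> R) : R := Rabs (dXi0 Xi 0).
Definition Xi_om0 (Xi : R -> R -> R -> R -> R) (i : nat) : R := 1 + Rabs (dXi0 Xi i).

Definition cont2 (w : R -> R -> R) : Prop :=
  forall t x, continuous (fun p : R * R => w (fst p) (snd p)) (t, x).

Definition dt (w : R -> R -> R) : R -> R -> R := fun t x => Derive (fun s => w s x) t.
Definition dpsi (w : R -> R -> R) : R -> R -> R := fun t x => Derive (fun y => w t y) x.

Definition C1_2 (w : R -> R -> R) : Prop :=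
  cont2 w /\
  (forall t x, ex_derive (fun s => w s x) t) /\
  (forall t x, ex_derive (fun y => w t y) x) /\
  cont2 (dt w) /\ cont2 (dpsi w).

Definition C1_norm_le (w : R -> R -> R) (e : R) : Prop :=
  forall t x, Rabs (w t x) <= e /\ Rabs (dt w t x) <= e /\ Rabs (dpsi w t x) <= e.

Definition periodic2 (T : R) (w : R -> R -> R) : Prop :=
  forall t x, w (t + T) x = w t x.

Definition periodic1 (T : R) (f : R -> R) : Prop :=
  forall t, f (t + T) = f t.

Definition supnorm1 (f : R -> R) : R :=
  real (Lub_Rbar (fun y => exists t, y = Rabs (f t))).
Definition supnorm2 (f : R -> R -> R) : R :=
  real (Lub_Rbar (fun y => exists t x, y = Rabs (f t x))).

Definition periodic_solution (Xi : R -> R -> R -> R -> R) (T : R)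
    (w1 w2 w3 : R -> R -> R) (psi : R -> R) : Prop :=
  periodic1 T psi /\
  forall t, is_derive psi t (Xi (psi t) (w1 t (psi t)) (w2 t (psi t)) (w3 t (psi t))).

(* Write [x = psi1 - psi2].  By the mean value theorem, [x' = D(t) x + f(t)]
   where [D(t)] is a [psi]-derivative of [Xi] near the origin, hence within [A/2]
   of [-A = dXi/dpsi(0)], and [|f| <= A/4 |x| + S], [S] being the weighted
   distance of the [omega]'s; the [A/4] uses that the [omega]'s are
   [eps2]-Lipschitz in [psi] with [eps2] small.  At a maximum of the periodic
   function [x] the derivative vanishes, which is impossible where [x > 4S/A];
   the same holds for [-x].  Then [|x'| <= |D| |x| + |f| <= 8S], and both bounds
   are dominated by the stated ones. *)

From Stdlib Require Import Reals List Lra Lia.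
From Coquelicot Require Import Coquelicot.
Open Scope R_scope.

Lemma ex_derive_continuity_pt (f : R -> R) x : ex_derive f x -> continuity_pt f x.
Proof.
  intro H. apply continuity_pt_filterlim.
  exact (@ex_derive_continuous R_AbsRing R_NormedModule f x H).
Qed.

(* Over two periods ending at [a] the maximum is attained in the interior:
   a maximum at an endpoint is repeated at the midpoint [a - T]. *)
Lemma periodic_interior_max (d : R -> R) T a : 0 < T ->
  (forall t, d (t + T) = d t) -> (forall t, continuity_pt d t) ->
  exists m, a - 2*T < m < a /\ forall t, a - 2*T <= t <= a -> d t <= d m.
Proof.
  intros HT Hp Hc.
  destruct (continuity_ab_maj d (a - 2*T) a) as [M [HM HMab]];
    [lra | intros; apply Hc |].
  assert (Hmid : d (a - T) = d a).
  { rewrite <- (Hp (a - T)). f_equal. ring. }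
  assert (Hleft : d (a - 2*T) = d a).
  { rewrite <- Hmid, <- (Hp (a - 2*T)). f_equal. ring. }
  destruct (Req_dec M (a - 2*T)) as [HMl | HMl].
  - exists (a - T). split; [lra |]. intros t Ht.
    rewrite Hmid, <- Hleft, <- HMl. exact (HM t Ht).
  - destruct (Req_dec M a) as [HMr | HMr].
    + exists (a - T). split; [lra |]. intros t Ht.
      rewrite Hmid, <- HMr. exact (HM t Ht).
    + exists M. split; [lra | exact HM].
Qed.

Lemma periodic_le_of_deriv_neg (d d' : R -> R) T K : 0 < T ->
  (forall t, d (t + T) = d t) -> (forall t, is_derive d t (d' t)) ->
  (forall t, K < d t -> d' t < 0) ->
  forall t, d t <= K.
Proof.
  intros HT Hp Hd Hneg t0.
  destruct (Rle_or_lt (d t0) K) as [Hle | Hgt]; [exact Hle | exfalso].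
  destruct (periodic_interior_max d T t0 HT Hp) as [m [Hm Hmax]].
  { intro t. apply ex_derive_continuity_pt. eexists. apply Hd. }
  assert (pr : derivable_pt d m) by (exists (d' m); apply is_derive_Reals, Hd).
  assert (Hcrit : d' m = 0).
  { rewrite <- (derive_pt_eq_0 d m (d' m) pr) by apply is_derive_Reals, Hd.
    apply (deriv_maximum d (t0 - 2*T) t0); try lra.
    intros x H1 H2. apply Hmax. lra. }
  assert (Hdm : K < d m) by (assert (d t0 <= d m) by (apply Hmax; lra); lra).
  specialize (Hneg m Hdm). lra.
Qed.

Lemma periodic_dissipative_upper (x y : R -> R) T A S : 0 < T -> 0 < A -> 0 <= S ->
  (forall t, x (t + T) = x t) -> (forall t, is_derive x t (y t)) ->
  (forall t, exists D, -3*A/2 <= D <= -A/2 /\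
     Rabs (y t - D * x t) <= A/4 * Rabs (x t) + S) ->
  forall t, x t <= 4*S/A.
Proof.
  intros HT HA HS Hp Hd Hlin.
  apply (periodic_le_of_deriv_neg x y T _ HT Hp Hd).
  intros t Ht. destruct (Hlin t) as [D [HD Hy]].
  assert (H4 : 4*S < A * x t).
  { apply Rmult_lt_compat_l with (r := A) in Ht; [| exact HA].
    replace (A * (4*S/A)) with (4*S) in Ht by (field; lra). exact Ht. }
  assert (Hx : 0 < x t) by nra.
  rewrite (Rabs_right (x t)) in Hy by lra. apply Rabs_le_between in Hy.
  assert (D * x t <= -A/2 * x t) by (apply Rmult_le_compat_r; lra).
  nra.
Qed.

Lemma periodic_dissipative_bound (x y : R -> R) T A S : 0 < T -> 0 < A -> 0 <= S ->
  (forall t, x (t + T) = x t) -> (forall t, is_derive x t (y t)) ->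
  (forall t, exists D, -3*A/2 <= D <= -A/2 /\
     Rabs (y t - D * x t) <= A/4 * Rabs (x t) + S) ->
  forall t, Rabs (x t) <= 4*S/A /\ Rabs (y t) <= 8*S.
Proof.
  intros HT HA HS Hp Hd Hlin.
  assert (Hup := periodic_dissipative_upper x y T A S HT HA HS Hp Hd Hlin).
  assert (Hlo : forall t, - x t <= 4*S/A).
  { apply (periodic_dissipative_upper (fun t => - x t) (fun t => - y t) T A S);
      try assumption.
    - intro t. now rewrite Hp.
    - intro t. apply (is_derive_opp x), Hd.
    - intro t. destruct (Hlin t) as [D [HD Hy]]. exists D. split; [exact HD |].
      rewrite Rabs_Ropp. replace (- y t - D * - x t) with (- (y t - D * x t)) by ring.
      rewrite Rabs_Ropp. exact Hy. }
  intro t.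
  assert (Hx : Rabs (x t) <= 4*S/A)
    by (apply Rabs_le_between; specialize (Hup t); specialize (Hlo t); lra).
  split; [exact Hx |].
  destruct (Hlin t) as [D [HD Hy]].
  replace (y t) with (D * x t + (y t - D * x t)) by ring.
  eapply Rle_trans; [apply Rabs_triang |]. rewrite Rabs_mult.
  assert (HDa : Rabs D <= 3*A/2) by (apply Rabs_le_between; lra).
  assert (Rabs D * Rabs (x t) <= 3*A/2 * (4*S/A))
    by (apply Rmult_le_compat; auto using Rabs_pos).
  assert (A/4 * Rabs (x t) <= A/4 * (4*S/A)) by (apply Rmult_le_compat_l; lra).
  replace (3*A/2 * (4*S/A)) with (6*S) in * by (field; lra).
  replace (A/4 * (4*S/A)) with S in * by (field; lra).
  lra.
Qed.

Lemma Rabs_le_between_bounds u v c B :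
  Rmin u v <= c <= Rmax u v -> Rabs u <= B -> Rabs v <= B -> Rabs c <= B.
Proof.
  intros Hc Hu Hv. apply Rabs_le_between in Hu. apply Rabs_le_between in Hv.
  apply Rabs_le_between. unfold Rmin, Rmax in Hc. destruct (Rle_dec u v); lra.
Qed.

Lemma mvt_Rabs_le (f : R -> R) a b L :
  (forall x, Rmin a b <= x <= Rmax a b -> ex_derive f x /\ Rabs (Derive f x) <= L) ->
  Rabs (f b - f a) <= L * Rabs (b - a).
Proof.
  intros H.
  destruct (MVT_gen f a b (Derive f)) as [c [Hc ->]].
  - intros x Hx. apply Derive_correct, H. lra.
  - intros x Hx. apply ex_derive_continuity_pt, H. lra.
  - rewrite Rabs_mult. apply Rmult_le_compat_r; [apply Rabs_pos | apply H, Hc].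
Qed.

Definition partials_controlled (Xi : R -> R -> R -> R -> R) (A K1 K2 K3 r e : R) : Prop :=
  (forall y a1 a2 a3, Rabs y <= r -> Rabs a1 <= e -> Rabs a2 <= e -> Rabs a3 <= e ->
     ex_derive (fun x => Xi x a1 a2 a3) y /\
     -3*A/2 <= Derive (fun x => Xi x a1 a2 a3) y <= -A/2) /\
  (forall y a1 a2 a3, Rabs y <= r -> Rabs a1 <= e -> Rabs a2 <= e -> Rabs a3 <= e ->
     ex_derive (fun x => Xi y x a2 a3) a1 /\ Rabs (Derive (fun x => Xi y x a2 a3) a1) <= K1) /\
  (forall y a1 a2 a3, Rabs y <= r -> Rabs a1 <= e -> Rabs a2 <= e -> Rabs a3 <= e ->
     ex_derive (fun x => Xi y a1 x a3) a2 /\ Rabs (Derive (fun x => Xi y a1 x a3) a2) <= K2) /\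
  (forall y a1 a2 a3, Rabs y <= r -> Rabs a1 <= e -> Rabs a2 <= e -> Rabs a3 <= e ->
     ex_derive (fun x => Xi y a1 a2 x) a3 /\ Rabs (Derive (fun x => Xi y a1 a2 x) a3) <= K3).

Lemma Xi_difference_linearization Xi A K1 K2 K3 r e y1 y2 a1 a2 a3 b1 b2 b3 :
  partials_controlled Xi A K1 K2 K3 r e ->
  Rabs y1 <= r -> Rabs y2 <= r -> Rabs a1 <= e -> Rabs a2 <= e -> Rabs a3 <= e ->
  Rabs b1 <= e -> Rabs b2 <= e -> Rabs b3 <= e ->
  exists D, -3*A/2 <= D <= -A/2 /\
    Rabs (Xi y1 a1 a2 a3 - Xi y2 b1 b2 b3 - D * (y1 - y2)) <=
      K1 * Rabs (a1 - b1) + K2 * Rabs (a2 - b2) + K3 * Rabs (a3 - b3).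
Proof.
  intros [Hpsi [Hom1 [Hom2 Hom3]]] Hy1 Hy2 Ha1 Ha2 Ha3 Hb1 Hb2 Hb3.
  pose (g := fun x => Xi x a1 a2 a3).
  assert (Hbox : forall x, Rmin y2 y1 <= x <= Rmax y2 y1 -> Rabs x <= r)
    by (intros; apply (Rabs_le_between_bounds y2 y1); assumption).
  destruct (MVT_gen g y2 y1 (Derive g)) as [c [Hc Hmvt]].
  - intros x Hx. apply Derive_correct, Hpsi; auto. apply Hbox. lra.
  - intros x Hx. apply ex_derive_continuity_pt, Hpsi; auto.
  - exists (Derive g c). split; [apply Hpsi; auto |].
    assert (E1 : Rabs (Xi y2 a1 a2 a3 - Xi y2 b1 a2 a3) <= K1 * Rabs (a1 - b1)).
    { apply (mvt_Rabs_le (fun x => Xi y2 x a2 a3)). intros x Hx.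
      apply Hom1; auto. apply (Rabs_le_between_bounds b1 a1); assumption. }
    assert (E2 : Rabs (Xi y2 b1 a2 a3 - Xi y2 b1 b2 a3) <= K2 * Rabs (a2 - b2)).
    { apply (mvt_Rabs_le (fun x => Xi y2 b1 x a3)). intros x Hx.
      apply Hom2; auto. apply (Rabs_le_between_bounds b2 a2); assumption. }
    assert (E3 : Rabs (Xi y2 b1 b2 a3 - Xi y2 b1 b2 b3) <= K3 * Rabs (a3 - b3)).
    { apply (mvt_Rabs_le (fun x => Xi y2 b1 b2 x)). intros x Hx.
      apply Hom3; auto. apply (Rabs_le_between_bounds b3 a3); assumption. }
    replace (Xi y1 a1 a2 a3 - Xi y2 b1 b2 b3 - Derive g c * (y1 - y2))
      with ((Xi y2 a1 a2 a3 - Xi y2 b1 a2 a3) + (Xi y2 b1 a2 a3 - Xi y2 b1 b2 a3)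
            + (Xi y2 b1 b2 a3 - Xi y2 b1 b2 b3)) by (rewrite <- Hmvt; unfold g; ring).
    eapply Rle_trans; [apply Rabs_triang |].
    eapply Rle_trans; [apply Rplus_le_compat_r, Rabs_triang | lra].
Qed.

Lemma common_radius (P : nat -> R -> Prop) n :
  (forall i d d', 0 < d' <= d -> P i d -> P i d') ->
  (forall i, (i < n)%nat -> exists d, 0 < d /\ P i d) ->
  exists d, 0 < d /\ forall i, (i < n)%nat -> P i d.
Proof.
  intros Hmono. induction n as [| n IH]; intros Hex.
  - exists 1. split; [lra | intros; lia].
  - destruct IH as [d [Hd Hall]]; [intros; apply Hex; lia |].
    destruct (Hex n) as [dn [Hdn Hn]]; [lia |].
    exists (Rmin d dn). split; [now apply Rmin_pos |].
    intros i Hi. destruct (Nat.eq_dec i n) as [-> | Hne].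
    + apply (Hmono n dn); [split; [now apply Rmin_pos | apply Rmin_r] | exact Hn].
    + apply (Hmono i d); [split; [now apply Rmin_pos | apply Rmin_l] | apply Hall; lia].
Qed.

Definition pt4 (y a1 a2 a3 : R) : nat -> R :=
  fun j => match j with 0%nat => y | 1%nat => a1 | 2%nat => a2 | _ => a3 end.

Lemma smooth4_pderiv_near_origin Xi eps : smooth4 Xi -> 0 < eps ->
  exists d, 0 < d /\ forall i y a1 a2 a3, (i < 4)%nat ->
    Rabs y < d -> Rabs a1 < d -> Rabs a2 < d -> Rabs a3 < d ->
    Rabs (pderiv i (lift4 Xi) (pt4 y a1 a2 a3) - dXi0 Xi i) < eps.
Proof.
  intros Hs Heps.
  destruct (common_radius (fun i d => forall y a1 a2 a3,
      Rabs y < d -> Rabs a1 < d -> Rabs a2 < d -> Rabs a3 < d ->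
      Rabs (pderiv i (lift4 Xi) (pt4 y a1 a2 a3) - dXi0 Xi i) < eps) 4)
    as [d [Hd Hnear]].
  - intros i d d' Hd' H y a1 a2 a3 ? ? ? ?. apply H; lra.
  - intros i Hi. destruct (Hs (i :: nil)) as [Hc _]; [constructor; [exact Hi | constructor] |].
    destruct (Hc origin eps Heps) as [d [Hd Hnear]]. exists d. split; [exact Hd |].
    intros y a1 a2 a3 ? ? ? ?. apply Hnear. intros j Hj.
    unfold origin. rewrite Rminus_0_r. destruct j as [| [| [| [| j]]]]; simpl; auto; lia.
  - exists d. split; [exact Hd |]. intros i y a1 a2 a3 Hi. apply Hnear, Hi.
Qed.

Lemma smooth4_partials_controlled Xi : smooth4 Xi -> dXi0 Xi 0 < 0 ->
  exists rho, 0 < rho /\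
    partials_controlled Xi (- dXi0 Xi 0) (Xi_om0 Xi 1) (Xi_om0 Xi 2) (Xi_om0 Xi 3) rho rho.
Proof.
  intros Hs Hneg. set (eps := Rmin 1 (- dXi0 Xi 0 / 2)).
  assert (Heps1 : eps <= 1) by apply Rmin_l.
  assert (Heps2 : eps <= - dXi0 Xi 0 / 2) by apply Rmin_r.
  destruct (smooth4_pderiv_near_origin Xi eps Hs) as [d [Hd Hnear]];
    [apply Rmin_pos; lra |].
  assert (Hex : forall i y a1 a2 a3, (i < 4)%nat ->
     ex_derive (fun x => lift4 Xi (upd (pt4 y a1 a2 a3) i x)) (pt4 y a1 a2 a3 i)).
  { intros i y a1 a2 a3 Hi. destruct (Hs nil) as [_ H]; [constructor | exact (H i _ Hi)]. }
  assert (Hclose : forall i y a1 a2 a3, (i < 4)%nat ->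
     Rabs y <= d/2 -> Rabs a1 <= d/2 -> Rabs a2 <= d/2 -> Rabs a3 <= d/2 ->
     Rabs (pderiv i (lift4 Xi) (pt4 y a1 a2 a3) - dXi0 Xi i) < eps)
    by (intros; apply Hnear; auto; lra).
  assert (Hom : forall i y a1 a2 a3, (i < 4)%nat ->
     Rabs y <= d/2 -> Rabs a1 <= d/2 -> Rabs a2 <= d/2 -> Rabs a3 <= d/2 ->
     Rabs (pderiv i (lift4 Xi) (pt4 y a1 a2 a3)) <= Xi_om0 Xi i).
  { intros i y a1 a2 a3 Hi Hy H1 H2 H3. unfold Xi_om0.
    specialize (Hclose i y a1 a2 a3 Hi Hy H1 H2 H3).
    assert (Htri := Rabs_triang_inv (pderiv i (lift4 Xi) (pt4 y a1 a2 a3)) (dXi0 Xi i)).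
    lra. }
  exists (d/2). split; [lra |].
  split; [| split; [| split]]; intros y a1 a2 a3 Hy H1 H2 H3; split.
  - exact (Hex 0%nat y a1 a2 a3 ltac:(lia)).
  - assert (H := Hclose 0%nat y a1 a2 a3 ltac:(lia) Hy H1 H2 H3).
    apply Rabs_lt_between in H. change (pderiv 0 (lift4 Xi) (pt4 y a1 a2 a3))
      with (Derive (fun x => Xi x a1 a2 a3) y) in H. lra.
  - exact (Hex 1%nat y a1 a2 a3 ltac:(lia)).
  - exact (Hom 1%nat y a1 a2 a3 ltac:(lia) Hy H1 H2 H3).
  - exact (Hex 2%nat y a1 a2 a3 ltac:(lia)).
  - exact (Hom 2%nat y a1 a2 a3 ltac:(lia) Hy H1 H2 H3).
  - exact (Hex 3%nat y a1 a2 a3 ltac:(lia)).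
  - exact (Hom 3%nat y a1 a2 a3 ltac:(lia) Hy H1 H2 H3).
Qed.

Lemma supnorm1_le (f : R -> R) B : (forall t, Rabs (f t) <= B) -> supnorm1 f <= B.
Proof.
  intros H. unfold supnorm1.
  destruct (Lub_Rbar_correct (fun y => exists t, y = Rabs (f t))) as [Hub Hlub].
  assert (Hle : Rbar_le (Lub_Rbar (fun y => exists t, y = Rabs (f t))) (Finite B)).
  { apply Hlub. intros y [t ->]. apply H. }
  assert (Hge : Rbar_le (Finite (Rabs (f 0))) (Lub_Rbar (fun y => exists t, y = Rabs (f t))))
    by (apply Hub; exists 0; reflexivity).
  destruct (Lub_Rbar _); simpl in *; try contradiction. exact Hle.
Qed.

(* The finite bound [B] matters: for unbounded [f], [supnorm2 f] is the junk
   value [real p_infty = 0]. *)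
Lemma Rabs_le_supnorm2 (f : R -> R -> R) B : (forall t x, Rabs (f t x) <= B) ->
  forall t x, Rabs (f t x) <= supnorm2 f.
Proof.
  intros H t x. unfold supnorm2.
  destruct (Lub_Rbar_correct (fun y => exists t x, y = Rabs (f t x))) as [Hub Hlub].
  assert (Hle : Rbar_le (Lub_Rbar (fun y => exists t x, y = Rabs (f t x))) (Finite B)).
  { apply Hlub. intros y [t' [x' ->]]. apply H. }
  assert (Hge : Rbar_le (Finite (Rabs (f t x))) (Lub_Rbar (fun y => exists t x, y = Rabs (f t x))))
    by (apply Hub; exists t, x; reflexivity).
  destruct (Lub_Rbar _); simpl in *; try contradiction. exact Hge.
Qed.

Lemma Rabs_sub_le_supnorm2 (w1 w2 : R -> R -> R) e :
  C1_norm_le w1 e -> C1_norm_le w2 e ->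
  forall t x, Rabs (w1 t x - w2 t x) <= supnorm2 (fun t x => w1 t x - w2 t x).
Proof.
  intros H1 H2. apply (Rabs_le_supnorm2 _ (e + e)). intros t x.
  eapply Rle_trans; [apply Rabs_triang |]. rewrite Rabs_Ropp.
  apply Rplus_le_compat; [apply H1 | apply H2].
Qed.

Lemma supnorm2_sub_ge0 (w1 w2 : R -> R -> R) e :
  C1_norm_le w1 e -> C1_norm_le w2 e -> 0 <= supnorm2 (fun t x => w1 t x - w2 t x).
Proof.
  intros H1 H2. eapply Rle_trans;
    [apply Rabs_pos | apply (Rabs_sub_le_supnorm2 w1 w2 e H1 H2 0 0)].
Qed.

Lemma C1_difference_le (w1 w2 : R -> R -> R) e t y1 y2 :
  C1_2 w1 -> C1_norm_le w1 e -> C1_norm_le w2 e ->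
  Rabs (w1 t y1 - w2 t y2) <= e * Rabs (y1 - y2) + supnorm2 (fun t x => w1 t x - w2 t x).
Proof.
  intros [_ [_ [Hd _]]] H1 H2.
  replace (w1 t y1 - w2 t y2) with ((w1 t y1 - w1 t y2) + (w1 t y2 - w2 t y2)) by ring.
  eapply Rle_trans; [apply Rabs_triang |]. apply Rplus_le_compat.
  - apply (mvt_Rabs_le (fun y => w1 t y)). intros x _. split; [apply Hd | apply H1].
  - exact (Rabs_sub_le_supnorm2 w1 w2 e H1 H2 t y2).
Qed.

Lemma small_enough_radius rho K A : 0 < rho -> 0 < K -> 0 < A ->
  exists e, 0 < e /\ e <= rho /\ K * e <= A/4.
Proof.
  intros Hrho HK HA. exists (Rmin rho (A / (4 * K))).
  split; [apply Rmin_pos; [exact Hrho | apply Rdiv_lt_0_compat; lra] |].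
  split; [apply Rmin_l |].
  apply Rle_trans with (K * (A / (4 * K))); [| right; field; lra].
  apply Rmult_le_compat_l; [lra | apply Rmin_r].
Qed.

Lemma partials_controlled_mono Xi A K1 K2 K3 r e r' e' : r' <= r -> e' <= e ->
  partials_controlled Xi A K1 K2 K3 r e -> partials_controlled Xi A K1 K2 K3 r' e'.
Proof.
  intros Hr He [H0 [H1 [H2 H3]]].
  split; [| split; [| split]]; intros y a1 a2 a3 ? ? ? ?;
    [apply H0 | apply H1 | apply H2 | apply H3]; lra.
Qed.

Lemma rhs_difference_linearization Xi A K1 K2 K3 r e
    (w11 w12 w13 w21 w22 w23 : R -> R -> R) t y1 y2 :
  partials_controlled Xi A K1 K2 K3 r e -> 0 <= K1 -> 0 <= K2 -> 0 <= K3 ->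
  (K1 + K2 + K3) * e <= A/4 ->
  (forall w, In w (w11 :: w12 :: w13 :: w21 :: w22 :: w23 :: nil) ->
     C1_2 w /\ C1_norm_le w e) ->
  Rabs y1 <= r -> Rabs y2 <= r ->
  exists D, -3*A/2 <= D <= -A/2 /\
    Rabs (Xi y1 (w11 t y1) (w12 t y1) (w13 t y1) - Xi y2 (w21 t y2) (w22 t y2) (w23 t y2)
          - D * (y1 - y2))
      <= A/4 * Rabs (y1 - y2)
         + (K1 * supnorm2 (fun t x => w11 t x - w21 t x)
            + K2 * supnorm2 (fun t x => w12 t x - w22 t x)
            + K3 * supnorm2 (fun t x => w13 t x - w23 t x)).
Proof.
  intros Hpc HK1 HK2 HK3 HKe Hw Hy1 Hy2.
  destruct (Hw w11) as [C11 N11]; [simpl; tauto |].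
  destruct (Hw w12) as [C12 N12]; [simpl; tauto |].
  destruct (Hw w13) as [C13 N13]; [simpl; tauto |].
  destruct (Hw w21) as [_ N21]; [simpl; tauto |].
  destruct (Hw w22) as [_ N22]; [simpl; tauto |].
  destruct (Hw w23) as [_ N23]; [simpl; tauto |].
  destruct (Xi_difference_linearization Xi A K1 K2 K3 r e y1 y2
     (w11 t y1) (w12 t y1) (w13 t y1) (w21 t y2) (w22 t y2) (w23 t y2) Hpc Hy1 Hy2
     (proj1 (N11 t y1)) (proj1 (N12 t y1)) (proj1 (N13 t y1))
     (proj1 (N21 t y2)) (proj1 (N22 t y2)) (proj1 (N23 t y2))) as [D [HD HR]].
  exists D. split; [exact HD |]. eapply Rle_trans; [exact HR |].
  assert (G1 := C1_difference_le w11 w21 e t y1 y2 C11 N11 N21).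
  assert (G2 := C1_difference_le w12 w22 e t y1 y2 C12 N12 N22).
  assert (G3 := C1_difference_le w13 w23 e t y1 y2 C13 N13 N23).
  apply Rmult_le_compat_l with (r := K1) in G1; [| exact HK1].
  apply Rmult_le_compat_l with (r := K2) in G2; [| exact HK2].
  apply Rmult_le_compat_l with (r := K3) in G3; [| exact HK3].
  assert ((K1 + K2 + K3) * e * Rabs (y1 - y2) <= A/4 * Rabs (y1 - y2))
    by (apply Rmult_le_compat_r; [apply Rabs_pos | exact HKe]).
  lra.
Qed.

Lemma periodic_solutions_difference_bound Xi T A K1 K2 K3 r e
    (w11 w12 w13 w21 w22 w23 : R -> R -> R) (psi1 psi2 : R -> R) :
  0 < T -> 0 < A -> partials_controlled Xi A K1 K2 K3 r e ->
  0 <= K1 -> 0 <= K2 -> 0 <= K3 -> (K1 + K2 + K3) * e <= A/4 ->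
  (forall w, In w (w11 :: w12 :: w13 :: w21 :: w22 :: w23 :: nil) ->
     C1_2 w /\ C1_norm_le w e) ->
  periodic_solution Xi T w11 w12 w13 psi1 -> periodic_solution Xi T w21 w22 w23 psi2 ->
  (forall t, Rabs (psi1 t) <= r) -> (forall t, Rabs (psi2 t) <= r) ->
  let S := K1 * supnorm2 (fun t x => w11 t x - w21 t x)
         + K2 * supnorm2 (fun t x => w12 t x - w22 t x)
         + K3 * supnorm2 (fun t x => w13 t x - w23 t x) in
  0 <= S /\ forall t, Rabs (psi1 t - psi2 t) <= 4*S/A /\
                     Rabs (Derive psi1 t - Derive psi2 t) <= 8*S.
Proof.
  intros HT HA Hpc HK1 HK2 HK3 HKe Hw [Hper1 Hps1] [Hper2 Hps2] Hr1 Hr2 S.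
  assert (HS : 0 <= S).
  { assert (N : forall w, In w (w11 :: w12 :: w13 :: w21 :: w22 :: w23 :: nil) ->
                  C1_norm_le w e) by (intros; apply Hw; assumption).
    pose proof (supnorm2_sub_ge0 w11 w21 e (N w11 ltac:(simpl; tauto)) (N w21 ltac:(simpl; tauto))).
    pose proof (supnorm2_sub_ge0 w12 w22 e (N w12 ltac:(simpl; tauto)) (N w22 ltac:(simpl; tauto))).
    pose proof (supnorm2_sub_ge0 w13 w23 e (N w13 ltac:(simpl; tauto)) (N w23 ltac:(simpl; tauto))).
    unfold S. nra. }
  split; [exact HS |].
  apply (periodic_dissipative_bound _ _ T A S HT HA HS).
  - intro t. now rewrite Hper1, Hper2.
  - intro t. rewrite (is_derive_unique _ _ _ (Hps1 t)), (is_derive_unique _ _ _ (Hps2 t)).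
    apply (is_derive_minus psi1 psi2); [apply Hps1 | apply Hps2].
  - intro t. rewrite (is_derive_unique _ _ _ (Hps1 t)), (is_derive_unique _ _ _ (Hps2 t)).
    apply (rhs_difference_linearization Xi A _ _ _ r e); auto.
Qed.

Lemma dissipative_bounds_weaken A T S c : 0 < A -> 0 <= T -> 0 <= S -> 0 <= c ->
  4*S/A <= 9 * exp (A * T) * / A * S /\ 8*S <= 9 * exp (A * T) * S + (1 + c) * S.
Proof.
  intros HA HT HS Hc.
  assert (Hexp : 1 <= exp (A * T))
    by (pose proof (exp_ineq1_le (A * T)); assert (0 <= A * T) by nra; lra).
  assert (HSA : 0 <= S / A) by (apply Rdiv_le_0_compat; lra).
  replace (4 * S / A) with (4 * (S / A)) by (field; lra).
  replace (9 * exp (A * T) * / A * S) with (9 * exp (A * T) * (S / A)) by (field; lra).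
  split; nra.
Qed.

Lemma Xi_om0_ge1 Xi i : 1 <= Xi_om0 Xi i.
Proof. unfold Xi_om0. pose proof (Rabs_pos (dXi0 Xi i)). lra. Qed.

(* The constant
   [CXi = 8 / (T eps2)] makes [1 + CXi T eps2 = 9], which absorbs the factor [4]
   of the dissipative bound since [exp (A T) >= 1]. *)
Theorem theoremA2 (Xi : R -> R -> R -> R -> R) (T : R) :
  smooth4 Xi -> Xi 0 0 0 0 = 0 -> dXi0 Xi 0 < 0 -> 0 < T ->
  exists CXi eps2 r, 0 < CXi /\ 0 < eps2 /\ 0 < r /\
    forall (w11 w12 w13 w21 w22 w23 : R -> R -> R) (psi1 psi2 : R -> R),
      (forall w, List.In w (w11 :: w12 :: w13 :: w21 :: w22 :: w23 :: nil) ->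
         C1_2 w /\ periodic2 T w /\ C1_norm_le w eps2) ->
      periodic_solution Xi T w11 w12 w13 psi1 ->
      periodic_solution Xi T w21 w22 w23 psi2 ->
      (forall t, Rabs (psi1 t) <= r) -> (forall t, Rabs (psi2 t) <= r) ->
      let S := Xi_om0 Xi 1 * supnorm2 (fun t x => w11 t x - w21 t x)
             + Xi_om0 Xi 2 * supnorm2 (fun t x => w12 t x - w22 t x)
             + Xi_om0 Xi 3 * supnorm2 (fun t x => w13 t x - w23 t x) in
      supnorm1 (fun t => psi1 t - psi2 t)
        <= (1 + CXi * T * eps2) * exp (Xi_psi0 Xi * T) * / Xi_psi0 Xi * S /\
      supnorm1 (fun t => Derive psi1 t - Derive psi2 t)
        <= (1 + CXi * T * eps2) * exp (Xi_psi0 Xi * T) * S + (1 + CXi * eps2) * S.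
Proof.
  intros Hs _ Hneg HT. set (A := - dXi0 Xi 0).
  assert (HA : 0 < A) by (unfold A; lra).
  assert (HXA : Xi_psi0 Xi = A) by (unfold Xi_psi0, A; rewrite Rabs_left; lra).
  pose proof (Xi_om0_ge1 Xi 1) as HK1; pose proof (Xi_om0_ge1 Xi 2) as HK2;
    pose proof (Xi_om0_ge1 Xi 3) as HK3.
  destruct (smooth4_partials_controlled Xi Hs Hneg) as [rho [Hrho Hpc]].
  destruct (small_enough_radius rho (Xi_om0 Xi 1 + Xi_om0 Xi 2 + Xi_om0 Xi 3) A)
    as [eps2 [Heps2 [Hrho2 HKe]]]; try lra.
  exists (8 / (T * eps2)), eps2, rho.
  split; [apply Rdiv_lt_0_compat; [| apply Rmult_lt_0_compat]; lra |].
  split; [exact Heps2 |]. split; [exact Hrho |].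
  intros w11 w12 w13 w21 w22 w23 psi1 psi2 Hw Hsol1 Hsol2 Hr1 Hr2 S.
  assert (Hpc' : partials_controlled Xi A (Xi_om0 Xi 1) (Xi_om0 Xi 2) (Xi_om0 Xi 3) rho eps2)
    by (apply (partials_controlled_mono Xi A _ _ _ rho rho); auto with real).
  assert (Hw' : forall w, In w (w11 :: w12 :: w13 :: w21 :: w22 :: w23 :: nil) ->
                  C1_2 w /\ C1_norm_le w eps2)
    by (intros w Hin; destruct (Hw w Hin) as [? [_ ?]]; split; assumption).
  destruct (periodic_solutions_difference_bound Xi T A _ _ _ rho eps2
     w11 w12 w13 w21 w22 w23 psi1 psi2 HT HA Hpc' ltac:(lra) ltac:(lra) ltac:(lra)
     HKe Hw' Hsol1 Hsol2 Hr1 Hr2) as [HS Hbound].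
  fold S in HS, Hbound.
  replace (1 + 8 / (T * eps2) * T * eps2) with 9 by (field; lra).
  destruct (dissipative_bounds_weaken A T S (8 / (T * eps2) * eps2)) as [Hw1 Hw2]; try lra.
  { apply Rmult_le_pos; [apply Rdiv_le_0_compat; nra | lra]. }
  rewrite HXA. split; apply supnorm1_le; intro t; destruct (Hbound t); lra.
Qed.
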